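(* Assume $m\ge2$. There exists $g(x)\in A$ with $M_x^T=M_g$ if and only if either $f(x)=x^m\pm1$, or $m=2$ and $f(x)=x^2+ax-1$ for some $a\in\mathbb{F}$.
   Context: Let $\mathbb{F}$ be a finite field, $f(x)=x^m+\sum_{i=0}^{m-1}f_ix^i\in\mathbb{F}[x]$ monic of degree $m$, and $A=\mathbb{F}[x]/\langle f(x)\rangle$, elements identified with polynomials of degree $<m$. $M_x$ is the $m\times m$ companion matrix of $f$: its $i$-th row is the unit vector $e_{i+1}$ for $1\le i\le m-1$ and its last row is $(-f_0,-f_1,\ldots,-f_{m-1})$. For $g(x)=\sum_{i=0}^{m-1}a_ix^i\in A$, $M_g=\sum_{i=0}^{m-1}a_iM_x^i$. $M^T$ denotes the transpose. *)

From HB Require Import structures.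
From mathcomp Require Import all_boot all_order all_algebra all_field.
Set Implicit Arguments. Unset Strict Implicit. Unset Printing Implicit Defensive.
Import GRing.Theory.
Local Open Scope ring_scope.

Definition companion_mx (F : fieldType) (m : nat) (f : {poly F}) : 'M[F]_m :=
  \matrix_(i < m, j < m)
    if (i.+1 < m)%N then ((j : nat) == i.+1)%:R else - f`_j.

(* M_g = sum_{i<m} a_i M_x^i for g = sum_{i<m} a_i x^i in A = F[x]/<f>. *)
Definition mult_mx (F : fieldType) (m : nat) (f g : {poly F}) : 'M[F]_m :=
  \sum_(i < m) g`_i *: (companion_mx m f) ^+ i.

(* Use coordinates in the basis 1, x, ..., x^(m-1) of A, acting on row vectors.
   The matrix of multiplication by p in A has row i equal to x^i p mod f; M_x is
   this matrix for p = x, hence M_g is it for p = g.  If M_x^T = M_g, comparing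
   row 0 gives g = -f_0 x^(m-1), and comparing row 1 then forces f_0^2 = 1,
   f_j = 0 for 0 < j < m-1 and f_1 = -f_0 f_(m-1); for m > 2 only x^m +- 1
   survive, for m = 2 also x^2 + a x - 1.  Conversely M_x^T = M_g for
   g = e x^(m-1) when f = x^m - e with e^2 = 1, and M_x is symmetric (so g = x
   works) when f = x^2 + a x - 1. *)

From HB Require Import structures.
From mathcomp Require Import all_boot all_order all_algebra all_field zify.
Import GRing.Theory.
Set Implicit Arguments. Unset Strict Implicit. Unset Printing Implicit Defensive.
Local Open Scope ring_scope.

Section MultiplicationMatrix.
Variables (F : fieldType) (m : nat) (f : {poly F}).
Hypotheses (monic_f : f \is monic) (size_f : size f = m.+1).

Definition mulmod_mx (p : {poly F}) : 'M[F]_m :=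
  \matrix_(i < m) poly_rV ('X^i * p %% f).

Lemma mulmod_mxE p (i j : 'I_m) : mulmod_mx p i j = ('X^i * p %% f)`_j.
Proof. by rewrite !mxE. Qed.

Lemma modp_small_size (p : {poly F}) : (size p <= m)%N -> p %% f = p.
Proof. by move=> sp; rewrite modp_small // size_f ltnS. Qed.

Lemma modp_size_succ (p : {poly F}) : (size p <= m.+1)%N -> p %% f = p - p`_m *: f.
Proof.
move=> sp; rewrite -{1}[p](subrK (p`_m *: f)) addrC -mul_polyC modp_addl_mul_small //.
rewrite size_f ltnS; apply/leq_sizeP => j le_mj; rewrite coefB coefCM.
have /monicP := monic_f; rewrite /lead_coef size_f /= => f_m.
case: (ltngtP m j) le_mj => // [lt_mj|<-] _; last by rewrite f_m mulr1 subrr.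
by rewrite [p`_j]nth_default ?[f`_j]nth_default ?size_f ?mulr0 ?subr0 // (leq_trans sp).
Qed.

Lemma size_modp_leq (p : {poly F}) : (size (p %% f)%R <= m)%N.
Proof. by rewrite -ltnS -size_f ltn_modp -size_poly_gt0 size_f. Qed.

Lemma mul_poly_rV_mulmod_mx (q p : {poly F}) : (size q <= m)%N ->
  poly_rV q *m mulmod_mx p = poly_rV (q * p %% f) :> 'rV_m.
Proof.
move=> sq; apply/rowP => j.
rewrite -{2}[q](take_poly_id sq) /take_poly poly_def mulr_suml.
rewrite (big_morph _ (modpD f) (mod0p f)) !mxE coef_sum.
by apply: eq_bigr => i _; rewrite !mxE -scalerAl modpZl coefZ.
Qed.

Lemma mulmod_mxM p q : mulmod_mx p *m mulmod_mx q = mulmod_mx (p * q).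
Proof.
apply/row_matrixP => i; rewrite row_mul !rowK mul_poly_rV_mulmod_mx ?size_modp_leq //.
by rewrite mulrC modp_mul mulrCA [q * p]mulrC.
Qed.

Lemma mulmod_mx1 : mulmod_mx 1 = 1.
Proof.
apply/matrixP => i j.
by rewrite mulmod_mxE mulr1 modp_small_size ?size_polyXn // coefXn !mxE eq_sym.
Qed.

Lemma mulmod_mxX p k : mulmod_mx p ^+ k = mulmod_mx (p ^+ k).
Proof.
elim: k => [|k IH]; first by rewrite !expr0 mulmod_mx1.
by rewrite !exprS IH -mulmxE mulmod_mxM.
Qed.

Lemma mulmod_mx0 : mulmod_mx 0 = 0.
Proof. by apply/matrixP => i j; rewrite mulmod_mxE mulr0 mod0p coef0 mxE. Qed.

Lemma mulmod_mxD p q : mulmod_mx (p + q) = mulmod_mx p + mulmod_mx q.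
Proof. by apply/matrixP => i j; rewrite !mxE mulrDr modpD coefD. Qed.

Lemma mulmod_mxZ a p : mulmod_mx (a *: p) = a *: mulmod_mx p.
Proof. by apply/matrixP => i j; rewrite !mxE -scalerAr modpZl coefZ. Qed.

Lemma companion_mulmod_mx : companion_mx m f = mulmod_mx 'X.
Proof.
apply/matrixP => i j; rewrite mxE mulmod_mxE -exprSr.
case: ltnP => [lt_i1m|le_mi1].
  by rewrite modp_small_size ?size_polyXn // coefXn.
have -> : i.+1 = m by apply/eqP; rewrite eqn_leq ltn_ord.
rewrite modp_size_succ ?size_polyXn // coefXn eqxx scale1r coefB coefXn.
by rewrite ltn_eqF ?sub0r.
Qed.

Lemma mult_mx_mulmod (g : {poly F}) : (size g <= m)%N -> mult_mx m f g = mulmod_mx g.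
Proof.
move=> sg; rewrite /mult_mx companion_mulmod_mx.
under eq_bigr do rewrite mulmod_mxX -mulmod_mxZ.
by rewrite -(big_morph _ mulmod_mxD mulmod_mx0) -poly_def -/(take_poly m g) take_poly_id.
Qed.

End MultiplicationMatrix.

Lemma monic_trinomial (F : fieldType) m (f : {poly F}) :
  f \is monic -> size f = m.+1 -> (1 < m)%N ->
  (forall j, (0 < j < m.-1)%N -> f`_j = 0) ->
  f = 'X^m + f`_m.-1 *: 'X^(m.-1) + (f`_0)%:P.
Proof.
move=> /monicP + size_f m_gt1 f_mid; rewrite /lead_coef size_f /= => f_m.
apply/polyP => k; rewrite !coefD coefZ !coefXn coefC.
have [lt_mk | le_km] := ltnP m k.
  rewrite nth_default ?size_f // (gtn_eqF lt_mk) (_ : k == m.-1 = false) ?ifN_eq;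
    by [rewrite mulr0 !addr0 | lia].
have [-> | ne_km] := eqVneq k m.
  by rewrite f_m (_ : m == m.-1 = false) ?ifN_eq ?mulr0 ?addr0 //; lia.
have [-> | ne_km1] := eqVneq k m.-1.
  by rewrite mulr1 add0r ifN_eq ?addr0 //; lia.
rewrite mulr0 !add0r; case: eqVneq => [-> // | ne_k0].
by rewrite f_mid //; lia.
Qed.

Section TransposedCompanion.
Variables (F : fieldType) (m : nat) (f : {poly F}).
Hypotheses (monic_f : f \is monic) (size_f : size f = m.+1) (m_gt1 : (1 < m)%N).
Local Notation C := (companion_mx m f).
Let i0 : 'I_m := Ordinal (ltnW m_gt1).
Let i1 : 'I_m := Ordinal m_gt1.

Lemma tr_companion_mulmod_poly (g : {poly F}) :
  (size g <= m)%N -> C^T = mulmod_mx m f g -> g = - f`_0 *: 'X^(m.-1).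
Proof.
move=> sg trC; apply/polyP => k; rewrite coefZ coefXn.
have [lt_km | le_mk] := ltnP k m; last first.
  by rewrite nth_default ?(leq_trans sg) // (_ : k == m.-1 = false) ?mulr0 //; lia.
have := congr1 (fun A : 'M_m => A i0 (Ordinal lt_km)) trC.
rewrite /= !mxE /= expr0 mul1r (modp_small_size size_f) // => <-.
case: ltnP => k_m1.
  by rewrite (_ : k == m.-1 = false) ?mulr0 //; lia.
by rewrite (_ : k == m.-1) ?mulr1 //; lia.
Qed.

Lemma tr_companion_mulmod_col1 (g : {poly F}) :
  (size g <= m)%N -> C^T = mulmod_mx m f g -> forall j : 'I_m, C j i1 = f`_0 * f`_j.
Proof.
move=> sg trC j; have := congr1 (fun A : 'M_m => A i1 j) trC.
rewrite mxE => ->; rewrite mulmod_mxE (tr_companion_mulmod_poly sg trC) /=.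
rewrite -scalerAr -exprS prednK ?(ltnW m_gt1) // modpZl.
rewrite (modp_size_succ monic_f size_f) ?size_polyXn // coefXn eqxx scale1r.
rewrite coefZ coefB coefXn.
by rewrite ltn_eqF // sub0r mulrNN.
Qed.

Lemma tr_companion_coef (g : {poly F}) :
  (size g <= m)%N -> C^T = mulmod_mx m f g ->
  [/\ f`_0 ^+ 2 = 1, f`_1 = - (f`_0 * f`_m.-1)
    & forall j, (0 < j < m.-1)%N -> f`_j = 0].
Proof.
move=> sg trC; have row1 := tr_companion_mulmod_col1 sg trC.
have f0_sq : f`_0 ^+ 2 = 1 by have := row1 i0; rewrite mxE /= m_gt1 expr2 => <-.
have f0_neq0 : f`_0 != 0 by rewrite -sqrf_eq0 f0_sq oner_neq0.
split=> // [|j /andP[j_gt0 j_lt]].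
  have lt_m1m : (m.-1 < m)%N by lia.
  have := row1 (Ordinal lt_m1m).
  by rewrite mxE /= prednK ?ltnn ?(ltnW m_gt1) // => <-; rewrite opprK.
have lt_jm : (j < m)%N by lia.
have := row1 (Ordinal lt_jm); rewrite mxE /= ifT ?eqSS ?(ltn_eqF j_gt0); last by lia.
by move/esym/eqP; rewrite mulf_eq0 (negPf f0_neq0) => /eqP.
Qed.

Lemma tr_companion_mulmod_shape (g : {poly F}) :
  (size g <= m)%N -> C^T = mulmod_mx m f g ->
  f = 'X^m + 1 \/ f = 'X^m - 1 \/ (m = 2%N /\ exists a, f = 'X^2 + a *: 'X - 1).
Proof.
move=> sg trC; have [f0_sq f1E f_mid] := tr_companion_coef sg trC.
have fE := monic_trinomial monic_f size_f m_gt1 f_mid.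
have binomial : f`_m.-1 = 0 -> f = 'X^m + 1 \/ f = 'X^m - 1.
  move=> fm1; rewrite fE fm1 scale0r addr0.
  have := sqrf_eq1 f`_0; rewrite f0_sq eqxx => /esym/orP[] /eqP ->;
    by [left; rewrite polyC1 | right; rewrite polyCN polyC1].
have [m2 | m_gt2] : m = 2%N \/ (2 < m)%N by lia.
- subst m; have /eqP := f1E; rewrite -addr_eq0 -{1}[f`_1]mul1r -mulrDl mulf_eq0.
  case/orP=> [/eqP f0 | /eqP/binomial [] ->]; [ | by left | by right; left].
  have f0E : f`_0 = -1 by apply/eqP; rewrite -addr_eq0 addrC f0.
  by right; right; split=> //; exists f`_1; rewrite {1}fE f0E polyCN polyC1 expr1.
- have f1 : f`_1 = 0 by apply: f_mid; lia.
  move: f1E; rewrite f1 => /esym/eqP; rewrite oppr_eq0 mulf_eq0 -sqrf_eq0 f0_sq oner_eq0.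
  by move/eqP/binomial => [] ->; [left | right; left].
Qed.
End TransposedCompanion.

Lemma tr_companion_XnsubC (F : fieldType) n (e : F) : e ^+ 2 = 1 ->
  (companion_mx n.+1 ('X^(n.+1) - e%:P))^T =
    mulmod_mx n.+1 ('X^(n.+1) - e%:P) (e *: 'X^n).
Proof.
move=> e_sq; set f := 'X^(n.+1) - e%:P.
have monic_f : f \is monic by apply: monicXnsubC.
have size_f : size f = n.+2 by apply: size_XnsubC.
have coef_f k : f`_k = (k == n.+1)%:R - (k == 0)%:R * e.
  by rewrite coefB coefXn coefC mulrC mulr_natr; case: (k == 0).
apply/matrixP => i j; rewrite !mxE coef_f; case: i => [[|i] lt_in] /=.
  rewrite expr0 mul1r (modp_small_size size_f); last first.
    by rewrite (leq_trans (size_scale_leq _ _)) ?size_polyXn.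
  rewrite coefZ coefXn /= sub0r mul1r opprK.
  case: ltnP => j_n; first by rewrite (_ : (j == n :> nat) = false) ?mulr0 //; lia.
  by rewrite (_ : (j == n :> nat)) ?mulr1 //; have := ltn_ord j; lia.
have XnE : 'X^(n.+1) %% f = e%:P.
  rewrite (modp_size_succ monic_f size_f) ?size_polyXn // coefXn eqxx scale1r.
  by rewrite opprB addrC subrK.
rewrite (_ : 'X^(i.+1) * (e *: 'X^n) = e *: 'X^i * 'X^(n.+1)); last first.
  by rewrite -scalerAr -scalerAl -!exprD addSnnS.
rewrite -modp_mul XnE [_ * e%:P]mulrC mul_polyC scalerA -expr2 e_sq scale1r.
have size_Xi : (size ('X^i : {poly F}) <= n.+1)%N by rewrite size_polyXn ltnW.
rewrite (modp_small_size size_f size_Xi) coefXn mul0r subr0 eqSS.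
case: ltnP => j_n; first by rewrite eq_sym.
have -> : (j == i :> nat) = false by have := ltn_ord j; lia.
by rewrite eqSS (_ : (i == n) = false) ?oppr0 //; lia.
Qed.

Lemma tr_companion_quadratic (F : fieldType) (a : F) :
  (companion_mx 2 ('X^2 + a *: 'X - 1))^T = mulmod_mx 2 ('X^2 + a *: 'X - 1) 'X.
Proof.
set f := 'X^2 + a *: 'X - 1; have fE : f = 'X^2 + (a *: 'X - 1) by rewrite /f addrA.
have size_r : (size (a *: 'X - 1 : {poly F})%R < size ('X^2 : {poly F}))%N.
  rewrite size_polyXn (leq_ltn_trans (size_add _ _)) // gtn_max size_opp size_poly1.
  by rewrite (leq_ltn_trans (size_scale_leq _ _)) ?size_polyX.
have monic_f : f \is monic by rewrite fE monicE (lead_coefDl size_r) lead_coefXn.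
have size_f : size f = 3 by rewrite fE (size_addl size_r) size_polyXn.
have f0 : f`_0 = -1 by rewrite coefB coefD coefXn coefZ coefX coef1 mulr0 !add0r.
rewrite -(companion_mulmod_mx monic_f size_f); apply/matrixP => i j; rewrite !mxE.
by case: i j => [[|[|i]] lt_i] [[|[|j]] lt_j] //=; rewrite f0 opprK.
Qed.

Theorem mainTheorem12 (F : finFieldType) (m : nat) (f : {poly F}) :
  (2 <= m)%N -> f \is monic -> size f = m.+1 ->
  (exists g : {poly F}, (size g <= m)%N /\
      (companion_mx m f)^T = mult_mx m f g)
  <->
  (f = 'X^m + 1 \/ f = 'X^m - 1 \/
   (m = 2%N /\ exists a : F, f = 'X^2 + a *: 'X - 1)).
Proof.
move=> m_gt1 monic_f size_f; split.
  case=> g [size_g]; rewrite mult_mx_mulmod //.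
  exact: (tr_companion_mulmod_shape monic_f size_f m_gt1 size_g).
case: m m_gt1 size_f => // n _ size_f.
have binomial e : e ^+ 2 = 1 -> f = 'X^(n.+1) - e%:P ->
    exists g : {poly F}, (size g <= n.+1)%N /\ (companion_mx n.+1 f)^T = mult_mx n.+1 f g.
  move=> e_sq fE; have size_g : (size (e *: 'X^n) <= n.+1)%N.
    by rewrite (leq_trans (size_scale_leq _ _)) ?size_polyXn.
  exists (e *: 'X^n); split=> //; rewrite mult_mx_mulmod // fE.
  exact: tr_companion_XnsubC.
case=> [fE | [fE | [[n1] [a fE]]]].
- by apply: (binomial (-1)); rewrite ?sqrrN ?expr1n // fE polyCN opprK polyC1.
- by apply: (binomial 1); rewrite ?expr1n // fE polyC1.
- subst n; exists 'X; split; first by rewrite size_polyX.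
  by rewrite mult_mx_mulmod ?size_polyX // fE tr_companion_quadratic.
Qed.
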